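(* Let $d>1$, $e\geq 1$, $n\geq 1$. A basis of $H^\bullet(\Gamma(de,e,n);\mathbb{Q})$ is naturally indexed by the orbits, under the action of $W=G(de,e,n)$, of the set of invariant $de$-multigraphs with loops on $n$ vertices: for each orbit with representative $\Delta$, the class $\sum_{w\in W}w(\omega_\Delta)$ is nonzero, and these classes form a basis, the class of $\Delta$ having degree equal to the number of edges plus loops of $\Delta$.
   Context: For a finite complex reflection group $W$ with hyperplane set $\mathcal A$, $P=\pi_1(\mathbb{C}^\ell\setminus\bigcup\mathcal A)$, $B=\pi_1((\mathbb{C}^\ell\setminus\bigcup\mathcal A)/W)$, $\Gamma=B/[P,P]$; then $H^\bullet(\Gamma;\mathbb{Q})\cong\Lambda^\bullet(\mathbb{Q}\mathcal A)^W$, where the degree-one part has basis the forms $d\log$ of the hyperplanes' linear forms, permuted by $W$. $G(de,e,n)$ is the group of $n\times n$ monomial matrices with nonzero entries in $\mu_{de}$ whose product is a $d$-th root of unity; $\Gamma(de,e,n)$ is $\Gamma$ for it. Its hyperplanes are $z_i=\zeta z_j$ ($i<j$, $\zeta\in\mu_{de}$) and $z_i=0$. $\tilde K_n(de)$ is the multigraph on $\{1,\dots,n\}$ with $de$ edges between each pair $i<j$, labelled by $\mu_{de}$, and one unlabelled loop at each vertex; a $de$-multigraph with loops on $n$ vertices is a subgraph of $\tilde K_n(de)$ (subset of edges and loops). The edge $(i,j,\zeta)$ corresponds to $d\log(z_i-\zeta z_j)$, the loop at $i$ to $d\log(z_i)$, and $\Delta$ to the wedge product $\omega_\Delta$ of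 these forms, edges first in lexicographic order of $(i,j,\zeta)$ (for a fixed order of $\mu_{de}$), then loops. $W$ acts on such multigraphs through its action on hyperplanes. $\mathrm{Stab}_W(\Delta)$ is the subgroup of $W$ preserving $\Delta$; $\Delta$ is invariant if every element of $\mathrm{Stab}_W(\Delta)$ induces an even permutation of the set of edges and loops of $\Delta$. *)

From HB Require Import structures.
From mathcomp Require Import all_boot all_order all_algebra all_fingroup.
Set Implicit Arguments.
Unset Strict Implicit.
Unset Printing Implicit Defensive.
Import GRing.Theory Num.Theory.

(* Hyperplanes of G(de,e,n), with m = de and zeta = exp(2 i pi / m):
   inl (p, k) with p = (i,j), i < j : the hyperplane  z_i = zeta^k z_j
                                       (edge (i,j,zeta^k) of K~_n(de));
   inr i                              : the hyperplane  z_i = 0 (loop at i). *)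
Notation Hyp n m :=
  ((({p : 'I_n * 'I_n | p.1 < p.2}) * 'I_m) + 'I_n)%type.

(* x mod m, as an element of 'I_m (m > 0 is witnessed by k0). *)
Definition modI (m : nat) (k0 : 'I_m) (x : nat) : 'I_m :=
  Ordinal (ltn_pmod x (leq_ltn_trans (leq0n k0) (ltn_ord k0))).

(* The hyperplane z_x = zeta^k z_y for x <> y, normalised so that the smaller
   index comes first (z_y = zeta^{-k} z_x when y < x).  The fallback [inr x]
   is only reached when x = y, which never happens below. *)
Definition edgeA (n m : nat) (x y : 'I_n) (k : 'I_m) : Hyp n m :=
  if x < y then
    match (insub (x, y) : option {p : 'I_n * 'I_n | p.1 < p.2}) with
    | Some p => inl (p, k) | None => inr x end
  else
    match (insub (y, x) : option {p : 'I_n * 'I_n | p.1 < p.2}) with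
    | Some p => inl (p, modI k (m - k)) | None => inr x end.

(* An element (s, a) stands for the monomial matrix sending the basis vector
   e_j to zeta^(a j) e_(s j), i.e. (w z)_(s j) = zeta^(a j) z_j. *)
Definition Welt (n m : nat) := ({perm 'I_n} * {ffun 'I_n -> 'I_m})%type.

(* G(de,e,n): the product of the nonzero entries, zeta^(sum a), is a d-th
   root of unity iff de | d * sum a iff e | sum a. *)
Definition Wset (n d e : nat) : {set Welt n (d * e)} :=
  [set w : Welt n (d * e) | e %| \sum_(i < n) (w.2 i : nat)].

(* Action of w on hyperplanes: H |-> w(H).
   z_i = 0  maps to  y_(s i) = 0;
   z_i = zeta^k z_j  maps to  y_(s i) = zeta^(k + a i - a j) y_(s j). *)
Definition actA (n m : nat) (w : Welt n m) (H : Hyp n m) : Hyp n m :=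
  match H with
  | inr i => inr (w.1 i)
  | inl (p, k) =>
      let i := (sval p).1 in let j := (sval p).2 in
      edgeA (w.1 i) (w.1 j) (modI k (k + w.2 i + (m - w.2 j)))
  end.

(* Total order on hyperplanes: edges in lexicographic order of (i,j,k)
   (mu_m ordered by exponent k), then loops (ordered by vertex). *)
Definition key (n m : nat) (H : Hyp n m) : nat :=
  match H with
  | inl (p, k) => ((sval p).1 * n + (sval p).2) * m + k
  | inr i => n * n * m + i
  end.

Definition inv (s : seq nat) : nat :=
  \sum_(p < size s) \sum_(q < size s) ((p < q) && (nth 0 s q < nth 0 s p)).

Definition sortA (n m : nat) (S : {set Hyp n m}) : seq (Hyp n m) :=
  sort (fun x y => key x <= key y) (enum S).

(* Exterior algebra Lambda^.(Q A): basis the monomials e_S (S a subset of A,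
   wedge of its elements in increasing order); an element is its coordinate
   function on this basis. *)
Definition Lam (n m : nat) := {ffun {set Hyp n m} -> rat}.

Definition wedge (n m : nat) (s : seq (Hyp n m)) : Lam n m :=
  [ffun T => if uniq s && (T == [set x in s])
             then ((-1) ^+ inv (map (@key n m) s))%R else 0%R].

Definition omega (n m : nat) (D : {set Hyp n m}) : Lam n m := wedge (sortA D).

Definition actL (n m : nat) (w : Welt n m) (f : Lam n m) : Lam n m :=
  [ffun T => (\sum_(S : {set Hyp n m}) f S * wedge (map (actA w) (sortA S)) T)%R].

(* Delta is invariant: each w in Stab_W(Delta) induces an even permutation of
   the edges and loops of Delta (parity = parity of the number of inversions). *)
Definition invariantG (n d e : nat) (D : {set Hyp n (d * e)}) : bool :=
  [forall w in Wset n d e,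
     (actA w @: D == D) ==> ~~ odd (inv (map (@key _ _) (map (actA w) (sortA D))))].

Definition cls (n d e : nat) (D : {set Hyp n (d * e)}) : Lam n (d * e) :=
  [ffun T => (\sum_(w in Wset n d e) actL w (omega D) T)%R].

(* A monomial e_S of the exterior algebra is sent by w in W to +-e_(wS), the sign being
   the parity of the permutation that w induces between the sorted lists of S and wS.
   Counting, pair by pair, the disagreements between three total orders shows that this
   sign is a cocycle: sgn(uw, S) = sgn(w, S) sgn(u, wS).  Hence a W-invariant f satisfies
   f(wS) = sgn(w, S) f(S); on a non-invariant S some w in the stabiliser has sign -1, so
   f(S) = 0, and f is determined by its values on orbit representatives of invariant
   multigraphs.  The class of an invariant D is supported on the orbit of D, and its
   coefficient on D is the order of the stabiliser of D (every stabiliser element has sign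
   1), so it is positive.  Disjointness of the orbits gives linear independence, and
   f = sum_D f(D) / cls_D(D) * cls_D gives spanning. *)

From Pilot Require Import Defs.
From HB Require Import structures.
From mathcomp Require Import all_boot all_order all_algebra all_fingroup.
From mathcomp Require Import ring lra.
Import Order.TTheory GRing.Theory Num.Theory.

Set Implicit Arguments.
Unset Strict Implicit.
Unset Printing Implicit Defensive.

Lemma sum_pairs_even (T : eqType) (F : T -> T -> nat) (t : seq T) :
  (forall x, F x x = 0) ->
  {in t &, forall x y, x != y -> ~~ odd (F x y + F y x)} ->
  ~~ odd (\sum_(x <- t) \sum_(y <- t) F x y).
Proof.
move=> F0; elim: t => [|a t IHt] Fe; first by rewrite big_nil.
have Fe_t : {in t &, forall x y, x != y -> ~~ odd (F x y + F y x)}.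
  by move=> x y xt yt; apply: Fe; rewrite inE ?xt ?yt orbT.
have even_a : ~~ odd (\sum_(y <- t) (F a y + F y a)).
  rewrite big_seq; elim/big_ind: _ => //= [x y|y yt].
    by rewrite oddD => /negbTE -> /negbTE ->.
  have [->|ay] := eqVneq a y; first by rewrite F0.
  by apply: Fe; rewrite ?inE ?eqxx ?yt ?orbT.
rewrite big_cons /= big_cons F0 add0n.
rewrite [X in _ + X](eq_bigr (fun x => F x a + \sum_(y <- t) F x y)) => [|x _].
  by rewrite big_split /= addnA -big_split /= oddD (negbTE even_a) IHt.
by rewrite big_cons.
Qed.

Lemma dvdn_sum_modn (I : finType) (F : I -> nat) (d m : nat) : d %| m ->
  (d %| \sum_i F i %% m) = (d %| \sum_i F i).
Proof.
move=> dm; rewrite /dvdn -[in LHS]modn_summ.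
by under eq_bigr do rewrite (modn_dvdm _ dm); rewrite modn_summ.
Qed.

Lemma ltn_mulD (q r a b : nat) : q < a -> r < b -> q * b + r < a * b.
Proof.
move=> lt_qa lt_rb; rewrite (leq_trans (_ : _ < q * b + b)) ?ltn_add2l //.
by rewrite -mulSnr leq_mul2r lt_qa orbT.
Qed.

Lemma sum_ifeq_mull (R : pzSemiRingType) (I : finType) (i0 : I) (a : R) (F : I -> R) :
  (\sum_i (if i == i0 then a else 0) * F i = a * F i0)%R.
Proof. by rewrite (bigD1 i0) //= eqxx big1 ?addr0 // => i /negbTE ->; rewrite mul0r. Qed.

Section InversionParity.
Variables (T : eqType) (k : T -> nat) (x0 : T).
Hypothesis k_inj : injective k.
Local Notation leK := (fun x y : T => k x <= k y).

Lemma invE_index (h : T -> nat) (t : seq T) : uniq t ->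
  Defs.inv (map h t) =
    \sum_(x <- t) \sum_(y <- t) ((index x t < index y t) && (h y < h x)).
Proof.
move=> ut; rewrite /Defs.inv size_map (big_nth x0) big_mkord; apply: eq_bigr => p _.
rewrite (big_nth x0) big_mkord; apply: eq_bigr => q _.
by rewrite !index_uniq // !(nth_map x0).
Qed.

Lemma index_sort_lt (t : seq T) x y : x \in t -> y \in t -> x != y ->
  (index x (sort leK t) < index y (sort leK t)) = (k x < k y).
Proof.
move=> xt yt xy; set s := sort leK t.
have [xs ys] : x \in s /\ y \in s by rewrite !mem_sort.
have s_sorted : sorted leK s by apply: sort_sorted => a b; apply: leq_total.
have leK_trans : transitive leK := fun b a c => @leq_trans (k b) (k a) (k c).
have mono := sorted_leq_nth leK_trans (fun a => leqnn (k a)) x0 s_sorted.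
have kxy : k x != k y by rewrite (inj_eq k_inj).
have ix : index x s \in [pred i | i < size s] by rewrite inE index_mem.
have iy : index y s \in [pred i | i < size s] by rewrite inE index_mem.
case: (ltngtP (index x s) (index y s)) => [lt_xy|lt_yx|eq_xy].
- by have := mono _ _ ix iy (ltnW lt_xy); rewrite /= !nth_index // leq_eqVlt (negbTE kxy).
- have := mono _ _ iy ix (ltnW lt_yx); rewrite /= !nth_index // => le_yx.
  by apply/esym/negbTE; rewrite -leqNgt.
- by move: (congr1 (nth x0 s) eq_xy); rewrite !nth_index // => exy; rewrite exy eqxx in xy.
Qed.

Lemma inv_sort (t : seq T) : uniq t -> Defs.inv (map k (sort leK t)) = 0.
Proof.
move=> ut; rewrite invE_index ?sort_uniq // big_seq big1 // => x xs.
rewrite big_seq big1 // => y ys; rewrite !mem_sort in xs ys.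
have [->|xy] := eqVneq x y; first by rewrite ltnn.
by rewrite (index_sort_lt xs ys xy); case: ltngtP.
Qed.

(* For a pair x != y, the three relative orders given by the list t, by k and by
   k \o g disagree an even number of times. *)
Lemma odd_inv_map_comp (g : T -> T) (t : seq T) : injective g -> uniq t ->
  odd (Defs.inv (map k (map g t))) =
  odd (Defs.inv (map k t)) (+) odd (Defs.inv (map k (map g (sort leK t)))).
Proof.
move=> g_inj ut; rewrite -!map_comp !invE_index ?sort_uniq //.
have t_perm := permEl (perm_sort leK t).
set inv_k_kg := \sum_(x <- sort leK t) _.
have -> : inv_k_kg = \sum_(x <- t) \sum_(y <- t) ((k x < k y) && ((k \o g) y < (k \o g) x)).
  rewrite /inv_k_kg (perm_big _ t_perm); apply: eq_big_seq => x xt.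
  rewrite (perm_big _ t_perm); apply: eq_big_seq => y yt.
  have [->|xy] := eqVneq x y; first by rewrite !ltnn.
  by rewrite index_sort_lt.
set inv_t_kg := \sum_(x <- t) _; set inv_t_k := \sum_(x <- t) _.
set inv_k_kg' := \sum_(x <- t) _.
suff : ~~ odd (inv_t_kg + inv_t_k + inv_k_kg').
  by rewrite !oddD; case: (odd inv_t_kg); case: (odd inv_t_k); case: (odd inv_k_kg').
rewrite /inv_t_kg /inv_t_k /inv_k_kg' -!big_split /=.
under eq_bigr do rewrite -!big_split /=.
apply: sum_pairs_even => [x|x y xt yt xy]; first by rewrite !ltnn.
have swap a b : a != b -> (b < a) = ~~ (a < b) by case: ltngtP.
have index_neq : index x t != index y t.
  by apply: contra xy => /eqP/(congr1 (nth x0 t)); rewrite !nth_index // => ->.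
rewrite (swap _ _ index_neq) (swap (k x)) ?(inj_eq k_inj) //.
rewrite [(k \o g) x < _]swap ?(inj_eq (inj_comp k_inj g_inj)) 1?eq_sym //.
by case: (index x t < _); case: (k x < _); case: (_ < (k \o g) x).
Qed.

End InversionParity.

Section HyperplaneAction.
Variables n m : nat.
Hypothesis m_gt1 : 1 < m.
Local Notation Hy := (Hyp n m).

Lemma modI_eqZp (k0 k1 : 'I_m) (x y : nat) :
  (x%:R = y%:R :> 'Z_m)%R -> modI k0 x = modI k1 y.
Proof. by move=> exy; apply: val_inj; rewrite /= -!(val_Zp_nat m_gt1) exy. Qed.

Lemma modI_id (k0 i : 'I_m) : modI k0 i = i.
Proof. by apply: val_inj; rewrite /= modn_small. Qed.

Lemma natr_Zp_subm (i : 'I_m) : ((m - i)%:R : 'Z_m)%R = (- i%:R)%R.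
Proof. by rewrite natrB ?(ltnW (ltn_ord i)) // -(Zp_nat_mod m_gt1) modnn sub0r. Qed.

Lemma natr_Zp_submod (x : nat) : ((m - x %% m)%:R : 'Z_m)%R = (- x%:R)%R.
Proof.
have x_lt_m : x %% m < m by rewrite ltn_pmod // ltnW.
by rewrite (natr_Zp_subm (Ordinal x_lt_m)) /= (Zp_nat_mod m_gt1).
Qed.

Lemma insub_lt (x y : 'I_n) (lt_xy : x < y) :
  insub (x, y) = Some (exist (fun p : 'I_n * 'I_n => p.1 < p.2) (x, y) lt_xy).
Proof. exact: (@insubT _ (fun p : 'I_n * 'I_n => p.1 < p.2) _ (x, y) lt_xy). Qed.

Local Ltac Zp_simpl := rewrite ?(natrD, natr_Zp_subm, natr_Zp_submod, Zp_nat_mod m_gt1).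

Lemma edgeA_lt (x y : 'I_n) (k : 'I_m) (lt_xy : x < y) :
  edgeA x y k = inl (exist (fun p : 'I_n * 'I_n => p.1 < p.2) (x, y) lt_xy, k).
Proof. by rewrite /edgeA lt_xy insub_lt. Qed.

Lemma edgeA_sym (x y : 'I_n) (k : 'I_m) : x != y ->
  edgeA x y k = edgeA y x (modI k (m - k)).
Proof.
case: (ltngtP x y) => [lt_xy|lt_yx|/val_inj->]; rewrite ?eqxx // => _.
- rewrite edgeA_lt /edgeA ltnNge (ltnW lt_xy) /=.
  rewrite insub_lt; congr (inl (_, _)).
  by rewrite -[LHS](modI_id k); apply: modI_eqZp; Zp_simpl; rewrite opprK.
- rewrite [RHS]edgeA_lt /edgeA ltnNge (ltnW lt_yx) /=.
  by rewrite insub_lt.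
Qed.

Lemma actA_edgeA (w : Welt n m) (x y : 'I_n) (k : 'I_m) : x != y ->
  actA w (edgeA x y k) = edgeA (w.1 x) (w.1 y) (modI k (k + w.2 x + (m - w.2 y))).
Proof.
case: (ltngtP x y) => [lt_xy|lt_yx|/val_inj->]; rewrite ?eqxx // => _.
  by rewrite edgeA_lt.
rewrite edgeA_sym ?neq_ltn ?lt_yx ?orbT // edgeA_lt /=.
rewrite [RHS]edgeA_sym ?(inj_eq perm_inj) ?neq_ltn ?lt_yx ?orbT //.
by congr edgeA; apply: modI_eqZp; Zp_simpl; ring.
Qed.

Definition mulW (u w : Welt n m) : Welt n m :=
  (w.1 * u.1, [ffun j => modI (w.2 j) (u.2 (w.1 j) + w.2 j)])%g.

Lemma actA_mulW (u w : Welt n m) (H : Hy) : actA (mulW u w) H = actA u (actA w H).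
Proof.
case: H => [[[[i j] /= lt_ij] k]|i] /=; last by rewrite permM.
have i_neq_j : i != j by rewrite neq_ltn lt_ij.
rewrite actA_edgeA ?(inj_eq perm_inj) //= !permM !ffunE.
by congr edgeA; apply: modI_eqZp; Zp_simpl; ring.
Qed.

Definition idW : Welt n m := (1%g, [ffun=> Ordinal (ltnW m_gt1)]).

Lemma actA_idW (H : Hy) : actA idW H = H.
Proof.
case: H => [[[[i j] /= lt_ij] k]|i] /=; last by rewrite perm1.
rewrite !perm1 edgeA_lt !ffunE /= addn0 subn0; congr (inl (_, _)).
by apply: val_inj; rewrite /= modnDr modn_small.
Qed.

Lemma imset_actA_idW (S : {set Hy}) : actA idW @: S = S.
Proof. by rewrite (eq_imset _ actA_idW) imset_id. Qed.

Definition invW (w : Welt n m) : Welt n m :=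
  ((w.1)^-1, [ffun j => modI (w.2 j) (m - w.2 ((w.1)^-1 j))])%g.

Lemma mulVW (w : Welt n m) : mulW (invW w) w = idW.
Proof.
rewrite /mulW /idW /= mulgV; congr pair; apply/ffunP => j; rewrite !ffunE permK.
by rewrite -[RHS](modI_id (w.2 j)); apply: modI_eqZp; Zp_simpl; rewrite addNr.
Qed.

Lemma actA_inj (w : Welt n m) : injective (actA w).
Proof.
by apply: (can_inj (g := actA (invW w))) => H; rewrite -actA_mulW mulVW actA_idW.
Qed.

Lemma mulW_inj (u : Welt n m) : injective (mulW u).
Proof.
move=> [s a] [s' b] [/mulIg eq_s /ffunP eq_a]; subst s'; congr pair.
apply/ffunP => j; apply: val_inj; have := congr1 val (eq_a j); rewrite !ffunE /=.
by move/eqP; rewrite eqn_modDl !modn_small // => /eqP.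
Qed.

End HyperplaneAction.

Lemma key_inj n m : injective (@key n m).
Proof.
have ediv_inj q r q' r' b : r < b -> r' < b -> q * b + r = q' * b + r' -> q = q' /\ r = r'.
  by move=> lt_rb lt_r'b eqE; move: (edivn_eq q lt_rb); rewrite eqE edivn_eq // => -[].
have edge_lt (p : {p : 'I_n * 'I_n | p.1 < p.2}) (k : 'I_m) :
    ((sval p).1 * n + (sval p).2) * m + k < n * n * m.
  by case: p => [[i j] /= _]; rewrite !ltn_mulD.
case=> [[p k]|i] [[p' k']|i'] /= eq_key.
- have [] := ediv_inj _ _ _ _ _ (ltn_ord k) (ltn_ord k') eq_key.
  move=> /ediv_inj[] // eq_i eq_j eq_k.
  have -> : k = k' by apply: val_inj.
  have -> // : p = p'.
  apply: val_inj; case: p p' eq_i eq_j {eq_key} => [[i j] ?] [[i' j'] ?] /= eq_i eq_j.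
  by congr pair; apply: val_inj.
- by have := edge_lt p k; rewrite eq_key ltnNge leq_addr.
- by have := edge_lt p' k'; rewrite -eq_key ltnNge leq_addr.
- by congr inr; apply: val_inj; move/eqP: eq_key; rewrite eqn_add2l => /eqP.
Qed.

Section Exterior.
Variables n d e : nat.
Hypotheses (m_gt1 : 1 < d * e) (n_gt0 : 0 < n).
Local Notation m := (d * e).
Local Notation Hy := (Hyp n m).
Local Notation W := (Wset n d e).
Local Notation idW := (idW n m_gt1).
Local Notation leK := (fun x y : Hy => key x <= key y).

Lemma Wset_mulW (u w : Welt n m) : u \in W -> w \in W -> mulW u w \in W.
Proof.
rewrite !inE => eu ew; under eq_bigr do rewrite ffunE /=.
rewrite dvdn_sum_modn ?dvdn_mull // big_split /= dvdn_addl //.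
by rewrite (reindex_inj (@perm_inj _ w.1)) in eu.
Qed.

Lemma Wset_idW : idW \in W.
Proof. by rewrite inE big1 // => i _; rewrite ffunE. Qed.

Lemma mulW_Wset (u : Welt n m) : u \in W -> [set mulW u w | w in W] = W.
Proof.
move=> uW; apply/eqP; rewrite eqEcard card_imset; last exact: mulW_inj.
rewrite leqnn andbT; apply/subsetP => _ /imsetP[w wW ->]; exact: Wset_mulW.
Qed.

Lemma sum_Wset_mulW (u : Welt n m) (F : Welt n m -> rat) : u \in W ->
  (\sum_(w in W) F (mulW u w) = \sum_(w in W) F w)%R.
Proof.
by move=> uW; rewrite -[in RHS](mulW_Wset uW) big_imset // => ? ? _ _ /mulW_inj.
Qed.

Lemma Wset_invertible (v : Welt n m) : v \in W ->
  exists2 v', v' \in W & cancel (actA v) (actA v').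
Proof.
move=> vW; have /imsetP[v' v'W v'v] : idW \in [set mulW v w | w in W].
  by rewrite mulW_Wset // Wset_idW.
exists v' => // H; apply: (@actA_inj n m m_gt1 v).
by rewrite -(actA_mulW m_gt1) -v'v actA_idW.
Qed.

(* The sign of [w] on the monomial [e_S]: [w(e_S) = act_sign w S * e_(w S)]. *)
Definition act_sign (w : Welt n m) (S : {set Hy}) : rat :=
  ((-1) ^+ Defs.inv (map (@key n m) (map (actA w) (sortA S))))%R.

Lemma sortA_uniq (S : {set Hy}) : uniq (sortA S).
Proof. by rewrite sort_uniq enum_uniq. Qed.

Lemma mem_sortA (S : {set Hy}) : sortA S =i S.
Proof. by move=> H; rewrite mem_sort mem_enum. Qed.

Lemma set_map_sortA (w : Welt n m) (S : {set Hy}) :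
  [set H in map (actA w) (sortA S)] = actA w @: S.
Proof.
apply/setP => H; rewrite inE; apply/mapP/imsetP => -[H' H'S ->]; exists H' => //.
  by rewrite -mem_sortA.
by rewrite mem_sortA.
Qed.

Lemma wedge_map_sortA (w : Welt n m) (S T : {set Hy}) :
  wedge (map (actA w) (sortA S)) T = if T == actA w @: S then act_sign w S else 0%R.
Proof.
by rewrite ffunE (map_inj_uniq (@actA_inj n m m_gt1 w)) sortA_uniq set_map_sortA.
Qed.

Lemma omegaE (D S : {set Hy}) : omega D S = if S == D then 1%R else 0%R.
Proof.
have x0 : Hy := inr (Ordinal n_gt0).
rewrite ffunE sortA_uniq /=.
have -> : [set H in sortA D] = D by apply/setP => H; rewrite inE mem_sortA.
by rewrite (inv_sort x0 (@key_inj n m)) ?enum_uniq.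
Qed.

Lemma actLE (w : Welt n m) (f : Lam n m) (T : {set Hy}) :
  actL w f T = (\sum_S f S * (if T == actA w @: S then act_sign w S else 0))%R.
Proof. by rewrite ffunE; apply: eq_bigr => S _; rewrite wedge_map_sortA. Qed.

Lemma actL_imset (w : Welt n m) (f : Lam n m) (S : {set Hy}) :
  actL w f (actA w @: S) = (f S * act_sign w S)%R.
Proof.
rewrite actLE (bigD1 S) //= eqxx big1 ?addr0 // => S' neq_S'S.
case: eqP => [/(imset_inj (@actA_inj n m m_gt1 w)) eq_SS'|_]; last exact: mulr0.
by rewrite eq_SS' eqxx in neq_S'S.
Qed.

Lemma clsE (D T : {set Hy}) :
  cls D T = (\sum_(w in W) (if T == actA w @: D then act_sign w D else 0))%R.
Proof.
rewrite ffunE; apply: eq_bigr => w _.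
by rewrite actLE; under eq_bigr do rewrite omegaE; rewrite sum_ifeq_mull mul1r.
Qed.

Lemma act_sign_stab (D : {set Hy}) (w : Welt n m) : invariantG D -> w \in W ->
  actA w @: D = D -> act_sign w D = 1%R.
Proof.
move=> /forallP /(_ w) /implyP invD wW wD; move: (invD wW); rewrite wD eqxx /=.
by rewrite /act_sign -signr_odd => /negbTE->.
Qed.

Lemma imset_actA_mulW (u w : Welt n m) (S : {set Hy}) :
  actA (mulW u w) @: S = actA u @: (actA w @: S).
Proof. by rewrite -imset_comp; apply: eq_imset => H; rewrite /= actA_mulW. Qed.

Lemma act_sign_mulW (u w : Welt n m) (S : {set Hy}) :
  act_sign (mulW u w) S = (act_sign w S * act_sign u (actA w @: S))%R.
Proof.
have x0 : Hy := inr (Ordinal n_gt0).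
rewrite /act_sign; set t := map (actA w) (sortA S).
have t_uniq : uniq t by rewrite (map_inj_uniq (@actA_inj n m m_gt1 w)) sortA_uniq.
have sort_t : sort leK t = sortA (actA w @: S).
  apply/perm_sort_inP; first by move=> ? ? _ _; apply: leq_total.
  - by move=> ? ? ? _ _ _; apply: leq_trans.
  - by move=> ? ? _ _ /andP[le1 le2]; apply: (@key_inj n m); apply/eqP; rewrite eqn_leq le1.
  apply: uniq_perm; rewrite ?enum_uniq // => H.
  by rewrite mem_enum -set_map_sortA inE.
have -> : map (actA (mulW u w)) (sortA S) = map (actA u) t.
  by rewrite -map_comp; apply: eq_map => H; rewrite /= actA_mulW.
rewrite -signr_odd odd_inv_map_comp ?signr_addb ?signr_odd ?sort_t //.
  exact: key_inj.
exact: actA_inj.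
Qed.

Lemma actL_cls (D : {set Hy}) (u : Welt n m) : u \in W -> actL u (cls D) = cls D.
Proof.
move=> uW; apply/ffunP => T; rewrite actLE.
under eq_bigr => S _ do rewrite clsE big_distrl /=.
rewrite exchange_big /=.
under eq_bigr => w _ do rewrite sum_ifeq_mull.
rewrite clsE -(sum_Wset_mulW (fun w => if T == actA w @: D then act_sign w D else 0%R) uW).
apply: eq_bigr => w _; rewrite imset_actA_mulW act_sign_mulW.
by case: ifP; rewrite ?mulr0.
Qed.

Lemma actL_fixed_imset (f : Lam n m) (u : Welt n m) (S : {set Hy}) :
  actL u f = f -> f (actA u @: S) = (f S * act_sign u S)%R.
Proof. by move=> fu; rewrite -{1}fu actL_imset. Qed.

Lemma fixed_noninvariant_eq0 (f : Lam n m) (S : {set Hy}) :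
  (forall u, u \in W -> actL u f = f) -> ~~ invariantG S -> f S = 0%R.
Proof.
move=> fW /forallPn[w]; rewrite negb_imply => /andP[wW].
rewrite negb_imply negbK => /andP[/eqP wS odd_w].
have := actL_fixed_imset S (fW w wW); rewrite wS /act_sign -signr_odd odd_w expr1.
lra.
Qed.

Lemma cls_neq0_orbit (D T : {set Hy}) : cls D T != 0%R ->
  exists2 w, w \in W & actA w @: D = T.
Proof.
rewrite clsE.
have [w /andP[wW /eqP->] _|no_w] := pickP [pred w | (w \in W) && (T == actA w @: D)].
  by exists w.
by rewrite big1 ?eqxx // => w wW; move: (no_w w); rewrite /= wW /= => ->.
Qed.

Lemma cls_self_gt0 (D : {set Hy}) : invariantG D -> (0 < cls D D)%R.
Proof.
move=> invD; rewrite clsE (bigD1 idW) ?Wset_idW //=.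
have idD := imset_actA_idW m_gt1 D.
rewrite idD eqxx (act_sign_stab invD Wset_idW idD).
have : (0 <= \sum_(w in W | w != idW) (if D == actA w @: D then act_sign w D else 0))%R.
  apply: sumr_ge0 => w /andP[wW _]; case: eqP => // wD.
  by rewrite (act_sign_stab invD wW (esym wD)).
lra.
Qed.

Lemma cls_eq0_card (D T : {set Hy}) : #|T| != #|D| -> cls D T = 0%R.
Proof.
move=> neq_card; rewrite clsE big1 // => w _; case: eqP => // TwD.
by move: neq_card; rewrite TwD card_imset ?eqxx //; exact: actA_inj.
Qed.

Section Representatives.
Variable R : {set {set Hy}}.
Hypothesis R_invariant : forall D, D \in R -> invariantG D.
Hypothesis R_orbit_uniq : forall D1 D2, D1 \in R -> D2 \in R ->
  (exists2 w, w \in W & actA w @: D1 = D2) -> D1 = D2.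

Lemma cls_self_neq0 (D : {set Hy}) : D \in R -> cls D D != 0%R.
Proof. by move=> DR; rewrite gt_eqF // cls_self_gt0 // R_invariant. Qed.

Lemma sum_cls_orbit (c : {set Hy} -> rat) (D0 : {set Hy}) (v : Welt n m) :
  D0 \in R -> v \in W ->
  (\sum_(D in R) c D * cls D (actA v @: D0) = c D0 * cls D0 (actA v @: D0))%R.
Proof.
move=> D0R vW; rewrite (bigD1 D0) //= big1 ?addr0 // => D /andP[DR neq_DD0].
have [/eqP->|/cls_neq0_orbit[w wW wD]] := boolP (cls D (actA v @: D0) == 0%R).
  exact: mulr0.
have [v' v'W v'K] := Wset_invertible vW.
case/negP: neq_DD0; apply/eqP/R_orbit_uniq => //; exists (mulW v' w).
  exact: Wset_mulW.
by rewrite imset_actA_mulW wD -imset_comp (eq_imset _ v'K) imset_id.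
Qed.

Lemma cls_free (c : {set Hy} -> rat) :
  (forall T, (\sum_(D in R) c D * cls D T)%R = 0%R) -> forall D, D \in R -> c D = 0%R.
Proof.
move=> c0 D DR; have idD := imset_actA_idW m_gt1 D.
have /eqP := c0 D; rewrite -{1 2}idD sum_cls_orbit ?Wset_idW // idD mulf_eq0.
by rewrite (negbTE (cls_self_neq0 DR)) orbF => /eqP.
Qed.

Lemma cls_span (f : Lam n m) :
  (forall D, invariantG D -> exists2 D', D' \in R & exists2 w, w \in W & actA w @: D' = D) ->
  (forall w, w \in W -> actL w f = f) ->
  exists c : {set Hy} -> rat, forall T, f T = (\sum_(D in R) c D * cls D T)%R.
Proof.
move=> R_cover fW; exists (fun D => f D / cls D D)%R => T.
have [invT|nT] := boolP (invariantG T); last first.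
  rewrite (fixed_noninvariant_eq0 fW nT) big1 // => D _.
  by rewrite (fixed_noninvariant_eq0 (fun u => actL_cls D (u := u)) nT) mulr0.
have [D0 D0R [v vW <-]] := R_cover T invT.
rewrite sum_cls_orbit // (actL_fixed_imset _ (fW v vW)).
rewrite (actL_fixed_imset _ (actL_cls D0 vW)).
by rewrite mulrA divfK ?cls_self_neq0.
Qed.

End Representatives.

End Exterior.

Theorem theorem3p18 (d e n : nat) (hd : (1 < d)%N) (he : (0 < e)%N) (hn : (0 < n)%N)
  (R : {set {set Hyp n (d * e)}}) :
  (* R is a set of representatives of the W-orbits of invariant multigraphs *)
  (forall D, D \in R -> @invariantG n d e D) ->
  (forall D, @invariantG n d e D ->
     exists2 D', D' \in R & exists2 w, w \in Wset n d e & actA w @: D' = D) ->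
  (forall D1 D2, D1 \in R -> D2 \in R ->
     (exists2 w, w \in Wset n d e & actA w @: D1 = D2) -> D1 = D2) ->
  [/\ (forall D, D \in R -> exists T, @cls n d e D T != 0%R),
      (forall D, D \in R -> forall T : {set Hyp n (d * e)}, #|T| != #|D| -> @cls n d e D T = 0%R),
      (forall D, D \in R -> forall w, w \in Wset n d e -> actL w (@cls n d e D) = @cls n d e D),
      (forall c : {set Hyp n (d * e)} -> rat,
         (forall T, (\sum_(D in R) c D * @cls n d e D T)%R = 0%R) ->
         forall D, D \in R -> c D = 0%R) &
      (forall f : Lam n (d * e), (forall w, w \in Wset n d e -> actL w f = f) ->
         exists c : {set Hyp n (d * e)} -> rat,
           forall T, f T = (\sum_(D in R) c D * @cls n d e D T)%R)].
Proof.
move=> R_invariant R_cover R_orbit_uniq.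
have m_gt1 : 1 < d * e by rewrite (leq_trans hd) // leq_pmulr.
split.
- by move=> D DR; exists D; apply: (cls_self_neq0 m_gt1 hn R_invariant).
- by move=> D _ T; apply: cls_eq0_card.
- by move=> D _ w; apply: actL_cls.
- exact: (cls_free m_gt1 hn R_invariant R_orbit_uniq).
- by move=> f; apply: (cls_span m_gt1 hn R_invariant R_orbit_uniq).
Qed.
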